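(* Let $K$ be a number field and let $E$, $a$, $b$, $\mathcal B$, $S_0$ be as in the context, with conditions (a)--(g) holding. For $t\in K\setminus\mathcal B$ let $E_t$ be the elliptic curve $y^2=x^3+a(t)x^2+b(t)x$ and $E'_t$ the elliptic curve $y^2=x^3-2a(t)x^2+(a(t)^2-4b(t))x$ over $K$. Then for all but finitely many nonzero prime ideals $\mathfrak p\notin S_0$ of $\mathcal O_K$, if $t\in K\setminus\mathcal B$ satisfies $v_{\mathfrak p}(t)<0$, then $E_t$ and $E'_t$ both have good reduction at $\mathfrak p$.
   Context: Identify $K(T)$ with the function field of $\mathbb P^1_K$, and $\mathbb P^1(K)=K\cup\{\infty\}$. $E$ is an elliptic curve over $K(T)$ given by $y^2=x^3+ax^2+bx$ with $a,b\in\mathcal O_K[T]$, minimal over $K[T]$, with $2$-torsion point $(0,0)$; $E'$ is $y^2=x^3-2ax^2+(a^2-4b)x$; $\Delta=16(a^2-4b)b^2$. $\delta_E,\delta_{E'}$ into $K(T)^\times/(K(T)^\times)^2$ are the connecting homomorphisms for the dual isogeny and the $2$-isogeny $E\to E'$ with kernel $\langle(0,0)\rangle$: $\delta_E(O)=1$, $\delta_E((0,0))=b$, $\delta_E((x,y))=x$ otherwise; $\delta_{E'}(O)=1$, $\delta_{E'}((0,0))=a^2-4b$, $\delta_{E'}((x,y))=x$ otherwise (modulo squares). For closed points $P$ of $\mathbb P^1_K$, Tate's algorithm over $K(T)_P$ gives Kodaira symbols, reduction types, Tamagawa numbers $c_P$. $\mathcal B$: closed points of bad reduction of $E$; $\mathcal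 A\subseteq\mathcal B$: additive ones; $\mathcal M$: $P\in\mathcal B\setminus\mathcal A$ where $E,E'$ have symbols $\mathrm I_{2n},\mathrm I_n$ ($n\ge1$); $\mathcal M'$: those with $\mathrm I_n,\mathrm I_{2n}$. Assume $\mathcal B\subseteq\mathcal O_K\subseteq\mathbb P^1(K)$ (so $E$ has good reduction at $\infty$) and: (a) every point of $\mathcal B$ has degree $1$; (b) $\mathcal M,\mathcal M'\ne\emptyset$; (c) for $P\in\mathcal M$, $E'$ is split multiplicative at $P$ or has symbol $\mathrm I_n$, $n$ odd; (d) for $P\in\mathcal M'$, $E$ is split multiplicative at $P$ or has symbol $\mathrm I_n$, $n$ odd; (e) if $E$ has symbol $\mathrm I_n^*$ at $P\in\mathcal A$ then $c_P(E)=c_P(E')=4$; (f) $\dim_{\mathbb F_2}\delta_E(E(K(T)))\ge|\mathcal A|+|\mathcal M|-1$; (g) $\dim_{\mathbb F_2}\delta_{E'}(E'(K(T)))\ge|\mathcal A|+|\mathcal M'|-1$. $S_0$ is a finite set of nonzero prime ideals of $\mathcal O_K$ containing all those dividing $6\prod_{\alpha,\beta\in\mathcal B,\alpha\ne\beta}(\alpha-\beta)$ or dividing the leading coefficient of $\Delta$, such that $\mathcal O_{K,S_0}$ is a PID. $v_{\mathfrak p}$ denotes the normalized $\mathfrak p$-adic valuation. *)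

From HB Require Import structures.
From mathcomp Require Import all_boot all_order all_algebra all_field.
Set Implicit Arguments.
Unset Strict Implicit.
Unset Printing Implicit Defensive.
Import GRing.Theory.
Local Open Scope ring_scope.

(* General Weierstrass models y^2 + a1 xy + a3 y = x^3 + a2 x^2 + a4 x + a6 *)
(* over a field F, and their standard invariants (Silverman III.1).     *)
Section Weierstrass.
Variable F : fieldType.

Record wmodel := WModel { wa1 : F; wa2 : F; wa3 : F; wa4 : F; wa6 : F }.

Definition wb2 (E : wmodel) := wa1 E ^+ 2 + 4 * wa2 E.
Definition wb4 (E : wmodel) := 2 * wa4 E + wa1 E * wa3 E.
Definition wb6 (E : wmodel) := wa3 E ^+ 2 + 4 * wa6 E.
Definition wb8 (E : wmodel) :=
  wa1 E ^+ 2 * wa6 E + 4 * wa2 E * wa6 E - wa1 E * wa3 E * wa4 E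
  + wa2 E * wa3 E ^+ 2 - wa4 E ^+ 2.
Definition wc4 (E : wmodel) := wb2 E ^+ 2 - 24 * wb4 E.
Definition wc6 (E : wmodel) := - wb2 E ^+ 3 + 36 * wb2 E * wb4 E - 216 * wb6 E.
Definition wdisc (E : wmodel) :=
  - wb2 E ^+ 2 * wb8 E - 8 * wb4 E ^+ 3 - 27 * wb6 E ^+ 2
  + 9 * wb2 E * wb4 E * wb6 E.

(* E' is obtained from E by the change of variables
   x = u^2 x' + r, y = u^3 y' + s u^2 x' + w  (Silverman, Table 3.1). *)
Definition wiso (E E' : wmodel) : Prop :=
  exists u r s w : F, u != 0 /\
    u * wa1 E' = wa1 E + 2 * s /\
    u ^+ 2 * wa2 E' = wa2 E - s * wa1 E + 3 * r - s ^+ 2 /\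
    u ^+ 3 * wa3 E' = wa3 E + r * wa1 E + 2 * w /\
    u ^+ 4 * wa4 E' = wa4 E - s * wa3 E + 2 * r * wa2 E
                      - (w + r * s) * wa1 E + 3 * r ^+ 2 - 2 * s * w /\
    u ^+ 6 * wa6 E' = wa6 E + r * wa4 E + r ^+ 2 * wa2 E + r ^+ 3
                      - w * wa3 E - w ^+ 2 - r * w * wa1 E.

(* ---- Local data: a discrete valuation ring O of F (given as a predicate)
        with uniformizer pi.  v(x) >= k  iff  x / pi^k \in O. ---- *)
Variable O : F -> Prop.

Definition unitO (x : F) := O x /\ O x^-1.
Definition integral (E : wmodel) :=
  O (wa1 E) /\ O (wa2 E) /\ O (wa3 E) /\ O (wa4 E) /\ O (wa6 E).

Definition good_red (E : wmodel) :=
  exists E', wiso E E' /\ integral E' /\ unitO (wdisc E').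

Variable pi : F.

Definition vge (x : F) (k : nat) := O (x / pi ^+ k).
Definition vexact (x : F) (k : nat) := unitO (x / pi ^+ k).

Definition minimal_model (E : wmodel) :=
  integral E /\ forall E', wiso E E' -> integral E' ->
    forall k, vge (wdisc E) k -> vge (wdisc E') k.

(* Kodaira symbol I_n (n >= 1): multiplicative reduction with
   v(Delta_min) = n (an integral model with unit c4 is minimal) *)
Definition mult_In (n : nat) (E : wmodel) :=
  (0 < n)%N /\ exists E', wiso E E' /\ integral E' /\ unitO (wc4 E')
                          /\ vexact (wdisc E') n.

Definition multiplicative (E : wmodel) := exists n, mult_In n E.
Definition additive (E : wmodel) := ~ good_red E /\ ~ multiplicative E.

(* split multiplicative: node moved to (0,0); the tangent lines
   y = m x at the node (m^2 + a1 m - a2 = 0 in the residue field) are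
   defined over the residue field *)
Definition split_mult (E : wmodel) :=
  exists E', wiso E E' /\ integral E' /\ unitO (wc4 E') /\
    vge (wdisc E') 1 /\ vge (wa3 E') 1 /\ vge (wa4 E') 1 /\ vge (wa6 E') 1 /\
    exists m, O m /\ vge (m ^+ 2 + wa1 E' * m - wa2 E') 1.

(* ---- Kodaira symbol I_n^* and Tamagawa number 4, following steps 6-7
        (and the subprocedure of step 7) of Tate's algorithm ---- *)
Definition step6_shape (E : wmodel) :=
  integral E /\ vge (wa1 E) 1 /\ vge (wa2 E) 1 /\ vge (wa3 E) 2 /\
  vge (wa4 E) 2 /\ vge (wa6 E) 3.

(* tam4 = true : additionally the Tamagawa number is 4 *)
Definition Instar_model (n : nat) (tam4 : bool) (E : wmodel) : Prop :=
  step6_shape E /\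
  if n == 0%N then
    (* P(T) = T^3 + a21 T^2 + a42 T + a63 has distinct roots mod pi;
       c = 1 + #roots in the residue field *)
    let A := wa2 E / pi in let B := wa4 E / pi ^+ 2 in
    let C := wa6 E / pi ^+ 3 in
    unitO (A ^+ 2 * B ^+ 2 - 4 * B ^+ 3 - 4 * A ^+ 3 * C - 27 * C ^+ 2
           + 18 * A * B * C) /\
    (tam4 -> exists r1 r2 r3, O r1 /\ O r2 /\ O r3 /\
       vge (A + (r1 + r2 + r3)) 1 /\
       vge (B - (r1 * r2 + r1 * r3 + r2 * r3)) 1 /\
       vge (C + r1 * r2 * r3) 1)
  else if odd n then
    (* n = 2m - 1 *)
    let m := n.+1./2 in
    vexact (wa2 E) 1 /\ vge (wa3 E) m.+1 /\ vge (wa4 E) m.+2 /\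
    vge (wa6 E) (m.*2.+2) /\
    let A := wa3 E / pi ^+ m.+1 in let B := wa6 E / pi ^+ (m.*2.+2) in
    unitO (A ^+ 2 + 4 * B) /\
    (tam4 -> exists z, O z /\ vge (z ^+ 2 + A * z - B) 1)
  else
    let m := n./2 in
    vexact (wa2 E) 1 /\ vge (wa3 E) m.+2 /\ vge (wa4 E) m.+2 /\
    vge (wa6 E) (m.*2.+3) /\
    let al := wa2 E / pi in let be := wa4 E / pi ^+ m.+2 in
    let ga := wa6 E / pi ^+ (m.*2.+3) in
    unitO (be ^+ 2 - 4 * al * ga) /\
    (tam4 -> exists z, O z /\ vge (al * z ^+ 2 + be * z + ga) 1).

Definition kodaira_Instar (n : nat) (E : wmodel) :=
  exists E', wiso E E' /\ Instar_model n false E'.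

Definition tamagawa4_Instar (E : wmodel) :=
  exists m E', wiso E E' /\ Instar_model m true E'.

End Weierstrass.

Section FunctionField.
Variable K : fieldType.
Definition FT := {fraction {poly K}}.
Definition tof (p : {poly K}) : FT := FracField.tofrac p.

(* finite closed points of P^1_K <-> monic irreducible polynomials *)
Definition closed_fin (q : {poly K}) := q \is monic /\ irreducible_poly q.
(* local ring of K(T) at the finite closed point q *)
Definition O_fin (q : {poly K}) (f : FT) :=
  exists g h : {poly K}, ~~ (q %| h) /\ f = tof g / tof h.
(* local ring at infinity, uniformizer 1/T *)
Definition O_inf (f : FT) :=
  exists g h : {poly K}, h != 0 /\ (size g <= size h)%N /\ f = tof g / tof h.
Definition pi_inf : FT := (tof 'X)^-1.

Definition model2 (F : fieldType) (A B : F) : wmodel F := WModel 0 A 0 B 0.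

(* points of y^2 = x^3 + A x^2 + B x over K(T); None is the origin O *)
Definition on_curve2 (A B : FT) (P : option (FT * FT)) :=
  match P with None => True | Some (x, y) => y ^+ 2 = x ^+ 3 + A * x ^+ 2 + B * x end.
(* connecting homomorphism: O |-> 1, (0,0) |-> B, (x,y) |-> x *)
Definition delta2 (B : FT) (P : option (FT * FT)) : FT :=
  match P with None => 1 | Some (x, _) => if x == 0 then B else x end.
End FunctionField.

(* elements of a field independent in F^x / (F^x)^2 (F_2-linearly) *)
Definition sq_indep (F : fieldType) (s : seq F) :=
  forall m : bitseq, size m = size s -> has id m ->
    ~ exists z : F, \prod_(x <- mask m s) x = z ^+ 2.

Section NumberField.
Variable K : fieldExtType rat.

Definition isInt (x : K) :=
  exists p : {poly int}, p \is monic /\ root (map_poly (fun z : int => z%:~R) p) x.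

(* nonzero prime ideal of O_K, given as a subset of K *)
Definition nzprime (p : K -> Prop) :=
  (forall x, p x -> isInt x) /\ p 0 /\
  (forall x y, p x -> p y -> p (x - y)) /\
  (forall r x, isInt r -> p x -> p (r * x)) /\
  ~ p 1 /\
  (forall x y, isInt x -> isInt y -> p (x * y) -> p x \/ p y) /\
  (exists x, x != 0 /\ p x).

(* localization O_{K,p}; v_p(x) >= 0 iff Oloc p x *)
Definition Oloc (p : K -> Prop) (x : K) :=
  exists y z, isInt y /\ isInt z /\ ~ p z /\ x = y / z.

Fixpoint inP (p : K -> Prop) (S : seq (K -> Prop)) : Prop :=
  match S with
  | [::] => False
  | q :: S' => (forall x, p x <-> q x) \/ inP p S'
  end.

Definition OS (S : seq (K -> Prop)) (x : K) :=
  forall p, nzprime p -> ~ inP p S -> Oloc p x.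

Definition is_PID_OS (S : seq (K -> Prop)) :=
  forall I : K -> Prop,
    (forall x, I x -> OS S x) -> I 0 ->
    (forall x y, I x -> I y -> I (x + y)) ->
    (forall r x, OS S r -> I x -> I (r * x)) ->
    exists g, OS S g /\ forall x, I x <-> exists r, OS S r /\ x = r * g.
End NumberField.

From Pilot Require Import Defs.
From HB Require Import structures.
From mathcomp Require Import all_boot all_order all_algebra all_field.
From mathcomp Require Import zify ring.
From Stdlib Require Import Classical.
Set Implicit Arguments.
Unset Strict Implicit.
Unset Printing Implicit Defensive.
Local Open Scope ring_scope.

(* Good reduction of E at infinity forces, by comparing the weights of c4 and
   of the discriminant under a change of variables, deg a <= 2m and
   deg b = deg (a^2 - 4b) = 4m, where 12m = deg Delta.  If v_p(t) < 0 then,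
   O_{K,S0} being a PID, t = y/z with y, z coprime, so s = 1/t lies in the
   maximal ideal of O_p.  Scaling by s^m turns E_t into the integral model with
   coefficients a(t) s^2m, b(t) s^4m, whose discriminant is the leading
   coefficient of Delta plus an element of the maximal ideal, hence a unit when
   p is not in S0.  The coefficients -2a, a^2 - 4b of E' have the same degree
   profile, so E'_t is treated identically, and no exceptional prime is needed. *)

(* GRing.Theory is imported only inside this module: its [additive] would
   shadow Defs.additive in the statement of lemma5p4. *)
Module PoleReduction.
Import GRing.Theory.

Lemma integral_lead_coefM (R K : comNzRingType) (f : {rmorphism R -> K})
    (q : {poly R}) (x : K) :
  root (map_poly f q) x -> integralOver f (f (lead_coef q) * x).
Proof.
move=> /rootP qx0; set n := (size q).-1.
have [n0 | n_gt0] := posnP n.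
  have /size1_polyC qC : (size q <= 1)%N by move: n0; rewrite /n; lia.
  move: qx0; rewrite qC map_polyC hornerC lead_coefC => ->.
  by rewrite mul0r; apply: integral0.
have size_q : size q = n.+1 by move: n_gt0; rewrite /n; lia.
set c := lead_coef q.
pose r := \poly_(i < n.+1) (if i == n then 1 else q`_i * c ^+ (n.-1 - i)).
have size_r : size r = n.+1 by apply: size_poly_eq; rewrite eqxx oner_eq0.
exists r; first by rewrite monicE lead_coefE size_r coef_poly ltnSn eqxx.
apply/rootP; move: qx0.
rewrite !(@horner_coef_wide _ n.+1) ?(leq_trans (size_poly _ _)) ?size_q ?size_r //.
rewrite !big_ord_recr /= !coef_map /= coef_poly ltnSn eqxx rmorph1 mul1r.
have -> : q`_n = c by rewrite /c lead_coefE size_q.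
move=> qx0; rewrite -[RHS](mulr0 (f c ^+ n.-1)) -[X in _ = _ * X]qx0 mulrDr mulr_sumr.
congr (_ + _); last first.
  rewrite -{1 3}(prednK n_gt0) !exprS exprMn.
  by set y := f c ^+ n.-1; set z := x ^+ n.-1; ring.
apply: eq_bigr => i _; rewrite coef_map /= coef_poly ltnS ltnW // ltn_eqF //.
rewrite rmorphM rmorphXn exprMn coef_map.
have -> : f c ^+ n.-1 = f c ^+ (n.-1 - i) * f c ^+ i.
  by rewrite -exprD subnK //; have := ltn_ord i; lia.
by set A := f c ^+ (n.-1 - i); set B := f c ^+ i; ring.
Qed.

Section CharZero.
Variable F : fieldType.
Hypothesis F_char0 : [pchar F] =i pred0.

Lemma natf_neq0 n : (0 < n)%N -> n%:R != 0 :> F.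
Proof. by move/pcharf0P: F_char0 => -> /lt0n_neq0. Qed.

Lemma size_natrM n (f : {poly F}) : (0 < n)%N -> size (n%:R * f) = size f.
Proof. by move=> n_gt0; rewrite -polyC_natr size_Cmul ?natf_neq0. Qed.

End CharZero.

Section AlgebraicIntegers.
Variable K : fieldExtType rat.
Implicit Types x y : K.

Lemma isIntP x : isInt x <-> integralOver intr x.
Proof. by split=> [[q [mq rq]] | [q mq rq]]; exists q. Qed.

Lemma isInt_int (k : int) : isInt (k%:~R : K).
Proof. exact/isIntP/integral_id. Qed.

Lemma isInt_nat n : isInt (n%:R : K).
Proof. exact: isInt_int n. Qed.

Lemma isIntD x y : isInt x -> isInt y -> isInt (x + y).
Proof. by move=> /isIntP ix /isIntP iy; apply/isIntP/integral_add. Qed.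

Lemma isIntM x y : isInt x -> isInt y -> isInt (x * y).
Proof. by move=> /isIntP ix /isIntP iy; apply/isIntP/integral_mul. Qed.

Lemma isIntN x : isInt x -> isInt (- x).
Proof. by move=> /isIntP ix; apply/isIntP/integral_opp. Qed.

Lemma isIntX x n : isInt x -> isInt (x ^+ n).
Proof.
move=> /isIntP ix; apply/isIntP; elim: n => [|n IHn]; first exact: integral1.
by rewrite exprS; apply: integral_mul.
Qed.

Lemma isInt_denom x : exists2 c : int, c != 0 & isInt (c%:~R * x).
Proof.
have /polyOver1P [q Dq] := minPolyOver 1%AS x.
have [qZ [a nz_a DqZ]] := rat_poly_scale q.
have qZ_neq0 : qZ != 0.
  apply: contraTneq (monic_neq0 (monic_minPoly 1%AS x)) => qZ0.
  by rewrite Dq DqZ qZ0 map_poly0 scaler0 map_poly0 eqxx.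
exists (lead_coef qZ); first by rewrite lead_coef_eq0.
apply/isIntP/integral_lead_coefM.
have : root (minPoly 1%AS x) x := root_minPoly 1%AS x.
rewrite Dq DqZ linearZ /= rootZ; last by rewrite -in_algE fmorph_eq0 invr_eq0 intr_eq0.
by rewrite -map_poly_comp (eq_map_poly (rmorph_int _)).
Qed.

Lemma intr_neq0 (c : int) : c != 0 -> (c%:~R : K) != 0.
Proof. by rewrite -(rmorph_int (in_alg K)) fmorph_eq0 intr_eq0. Qed.

Lemma pchar_numfield : [pchar K] =i pred0.
Proof. exact: ftrans (pchar_lalg K) (Num.Theory.pchar_num _). Qed.

Definition intpoly (f : {poly K}) := forall i, isInt f`_i.

Lemma intpolyD f g : intpoly f -> intpoly g -> intpoly (f + g).
Proof. by move=> If Ig i; rewrite coefD; apply: isIntD. Qed.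

Lemma intpolyN f : intpoly f -> intpoly (- f).
Proof. by move=> If i; rewrite coefN; apply: isIntN. Qed.

Lemma intpolyM f g : intpoly f -> intpoly g -> intpoly (f * g).
Proof.
move=> If Ig i; rewrite coefM; elim/big_ind: _ => [||j _]; last exact: isIntM.
  exact: isInt_nat 0.
exact: isIntD.
Qed.

Lemma intpoly_nat n : intpoly n%:R.
Proof.
by move=> i; rewrite -polyC_natr coefC; case: (i == 0%N); [exact: isInt_nat | exact: isInt_nat 0].
Qed.

Lemma intpolyX f n : intpoly f -> intpoly (f ^+ n).
Proof.
move=> If; elim: n => [|n IHn]; last by rewrite exprS; apply: intpolyM.
by rewrite expr0; apply: (intpoly_nat 1).
Qed.

Lemma intpoly_sqrB4M f g : intpoly f -> intpoly g -> intpoly (f ^+ 2 - 4 * g).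
Proof. by move=> If Ig; apply/intpolyD/intpolyN/intpolyM/Ig/intpoly_nat/intpolyX. Qed.

End AlgebraicIntegers.

Section LocalRing.
Variables (K : fieldExtType rat) (p : K -> Prop).
Hypothesis p_prime : nzprime p.
Implicit Types x y z : K.

Definition Mloc x := exists y z, [/\ isInt y, isInt z, p y, ~ p z & x = y / z].

Let p0 : p 0. Proof. by case: p_prime => _ []. Qed.
Let pB x y : p x -> p y -> p (x - y). Proof. by case: p_prime => _ [_ [pB _]]; apply: pB. Qed.
Let pD x y : p x -> p y -> p (x + y).
Proof. by move=> px py; rewrite -[y]opprK -[- y]sub0r; apply/pB/pB. Qed.
Let p1 : ~ p 1. Proof. by case: p_prime => _ [_ [_ [_ []]]]. Qed.

Lemma prime_pM r x : isInt r -> p x -> p (r * x).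
Proof. by case: p_prime => _ [_ [_ [pM _]]]; apply: pM. Qed.

Lemma prime_notpM x y : isInt x -> isInt y -> ~ p x -> ~ p y -> ~ p (x * y).
Proof. by case: p_prime => _ [_ [_ [_ [_ [pP _]]]]] Ix Iy npx npy /pP[]. Qed.

Lemma prime_notpX x n : isInt x -> ~ p x -> ~ p (x ^+ n).
Proof.
move=> Ix npx; elim: n => [|n IHn]; first by rewrite expr0.
by rewrite exprS; apply: prime_notpM => //; apply: isIntX.
Qed.

Lemma prime_notp16 : ~ p 2 -> ~ p 16.
Proof. by rewrite -[16%N]/(2 ^ 4)%N natrX; apply: prime_notpX; apply: isInt_nat. Qed.

Lemma prime_notp_mulr x y : isInt x -> ~ p (x * y) -> ~ p y.
Proof. by move=> Ix npxy py; apply/npxy/prime_pM. Qed.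

Lemma prime_notp_mull x y : isInt y -> ~ p (x * y) -> ~ p x.
Proof. by rewrite mulrC; apply: prime_notp_mulr. Qed.

Lemma notp_disc_lead_coef (d b : {poly K}) : intpoly d -> intpoly b -> ~ p 6 ->
  ~ p (lead_coef (16 * d * b ^+ 2)) -> [/\ ~ p 2, ~ p (lead_coef b) & ~ p (lead_coef d)].
Proof.
rewrite lead_coefM lead_coef_exp lead_coefM -polyC_natr lead_coefC => Id Ib np6 npD.
have Ild : isInt (lead_coef d) by rewrite lead_coefE.
have Ilb : isInt (lead_coef b) by rewrite lead_coefE.
have np_b2 : ~ p (lead_coef b * lead_coef b).
  by apply: prime_notp_mulr npD; exact: isIntM (isInt_nat _ 16) Ild.
have np_16d : ~ p (16 * lead_coef d) by apply: prime_notp_mull npD; apply: isIntX.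
split; [move=> p2; apply: np6 | exact: prime_notp_mulr Ilb np_b2 |].
  have -> : 6 = 3 * 2 :> K by rewrite -natrM.
  exact: prime_pM (isInt_nat _ 3) p2.
exact: prime_notp_mulr (isInt_nat _ 16) np_16d.
Qed.

Lemma notp_neq0 z : ~ p z -> z != 0.
Proof. by apply: contra_not_neq => ->. Qed.

Lemma Oloc_int x : isInt x -> Oloc p x.
Proof. by move=> Ix; exists x, 1; do !split => //; [exact: isInt_int 1 | rewrite divr1]. Qed.

Lemma OlocD x y : Oloc p x -> Oloc p y -> Oloc p (x + y).
Proof.
move=> [x1 [x2 [Ix1 [Ix2 [npx2 ->]]]]] [y1 [y2 [Iy1 [Iy2 [npy2 ->]]]]].
exists (x1 * y2 + y1 * x2), (x2 * y2); do !split.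
- by apply: isIntD; apply: isIntM.
- exact: isIntM.
- exact: prime_notpM.
- by rewrite addf_div ?notp_neq0.
Qed.

Lemma OlocM x y : Oloc p x -> Oloc p y -> Oloc p (x * y).
Proof.
move=> [x1 [x2 [Ix1 [Ix2 [npx2 ->]]]]] [y1 [y2 [Iy1 [Iy2 [npy2 ->]]]]].
exists (x1 * y1), (x2 * y2); do !split; try exact: isIntM.
- exact: prime_notpM.
- by rewrite mulf_div.
Qed.

Lemma OlocX x n : Oloc p x -> Oloc p (x ^+ n).
Proof.
move=> Ox; elim: n => [|n IHn]; last by rewrite exprS; apply: OlocM.
by rewrite expr0; apply/Oloc_int/(isInt_int _ 1).
Qed.

Lemma Mloc_Oloc x : Mloc x -> Oloc p x.
Proof. by move=> [y [z [Iy Iz _ npz ->]]]; exists y, z. Qed.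

Lemma Mloc0 : Mloc 0.
Proof. by exists 0, 1; split; rewrite ?mul0r //; [exact: isInt_int 0 | exact: isInt_int 1]. Qed.

Lemma Mloc_neq1 : ~ Mloc 1.
Proof.
move=> [y [z [_ _ py npz yz1]]].
have z0 := notp_neq0 npz.
by apply: npz; rewrite -[z]mul1r yz1 divfK.
Qed.

Lemma MlocD x y : Mloc x -> Mloc y -> Mloc (x + y).
Proof.
move=> [x1 [x2 [Ix1 Ix2 px1 npx2 ->]]] [y1 [y2 [Iy1 Iy2 py1 npy2 ->]]].
exists (x1 * y2 + y1 * x2), (x2 * y2); split.
- by apply: isIntD; apply: isIntM.
- exact: isIntM.
- by apply: pD; rewrite mulrC; apply: prime_pM.
- exact: prime_notpM.
- by rewrite addf_div ?notp_neq0.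
Qed.

Lemma MlocM r x : Oloc p r -> Mloc x -> Mloc (r * x).
Proof.
move=> [r1 [r2 [Ir1 [Ir2 [npr2 ->]]]]] [x1 [x2 [Ix1 Ix2 px1 npx2 ->]]].
exists (r1 * x1), (r2 * x2); split; try exact: isIntM.
- exact: prime_pM.
- exact: prime_notpM.
- by rewrite mulf_div.
Qed.

Lemma unitO_addMloc c e : isInt c -> ~ p c -> Mloc e -> unitO (Oloc p) (c + e).
Proof.
move=> Ic npc [y [z [Iy Iz py npz ->]]].
have Icz : isInt (c * z + y) by apply: isIntD => //; apply: isIntM.
have npcz : ~ p (c * z + y).
  by move=> pcz; have := pB pcz py; rewrite addrK; apply: prime_notpM.
have -> : c + y / z = (c * z + y) / z by rewrite mulrDl mulfK ?notp_neq0.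
by split; [exists (c * z + y), z | exists z, (c * z + y); rewrite invf_div].
Qed.

Lemma Oloc_dichotomy x : Oloc p x -> Mloc x \/ Oloc p x^-1.
Proof.
move=> [y [z [Iy [Iz [npz ->]]]]].
have [py | npy] := classic (p y); first by left; exists y, z.
by right; exists z, y; rewrite invf_div.
Qed.

End LocalRing.

Section SIntegers.
Variables (K : fieldExtType rat) (S0 : seq (K -> Prop)).
Hypothesis S0_PID : is_PID_OS S0.
Implicit Types x y z : K.

Lemma OS_int x : isInt x -> OS S0 x.
Proof. by move=> Ix q q_prime _; apply: Oloc_int. Qed.

Lemma OSD x y : OS S0 x -> OS S0 y -> OS S0 (x + y).
Proof. by move=> Ox Oy q q_prime qS0; apply: OlocD; [| apply: Ox | apply: Oy]. Qed.

Lemma OSM x y : OS S0 x -> OS S0 y -> OS S0 (x * y).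
Proof. by move=> Ox Oy q q_prime qS0; apply: OlocM; [| apply: Ox | apply: Oy]. Qed.

Let OS0 : OS S0 0. Proof. exact/OS_int/(isInt_int _ 0). Qed.
Let OS1 : OS S0 1. Proof. exact/OS_int/(isInt_int _ 1). Qed.

Lemma OS_denominator t : exists2 g, g != 0 & [/\ OS S0 g, OS S0 (g * t) &
  forall r, OS S0 r -> OS S0 (r * t) -> exists2 u, OS S0 u & r = u * g].
Proof.
pose J r := OS S0 r /\ OS S0 (r * t).
have [g [Og Jg]] : exists g, OS S0 g /\ forall r, J r <-> exists u, OS S0 u /\ r = u * g.
  apply: S0_PID => [r [] | | r1 r2 [O1 O1t] [O2 O2t] | u r Ou [Or Ort]] //.
  - by split; rewrite ?mul0r.
  - by split; rewrite ?mulrDl; apply: OSD.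
  - by split; rewrite -?mulrA; apply: OSM.
have [c c_neq0 Ict] := isInt_denom t.
have [|u [_ Dc]] := (Jg c%:~R).1; first by split; apply: OS_int => //; apply: isInt_int.
have [_ Ogt] : J g by apply/Jg; exists 1; rewrite mul1r.
exists g; first by apply: contra_neq (intr_neq0 K c_neq0) => g0; rewrite Dc g0 mulr0.
by split=> // r Or Ort; have [|v [Ov ->]] := (Jg r).1; [split | exists v].
Qed.

(* The generator h of (g, g t) divides g with a quotient that is again a
   denominator of t, hence a multiple of g: so h is a unit. *)
Lemma OS_coprime_frac t : exists y z, [/\ OS S0 y, OS S0 z, z != 0, t = y / z &
  exists a b, [/\ OS S0 a, OS S0 b & a * z + b * y = 1]].
Proof.
have [g g_neq0 [Og Ogt g_denom]] := OS_denominator t.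
pose J x := exists a b, [/\ OS S0 a, OS S0 b & x = a * g + b * (g * t)].
have [h [Oh Jh]] : exists h, OS S0 h /\ forall x, J x <-> exists u, OS S0 u /\ x = u * h.
  apply: S0_PID => [x [a [b [Oa Ob ->]]] | | x y [a [b [Oa Ob ->]]] [a' [b' [Oa' Ob' ->]]] |
                    r x Or [a [b [Oa Ob ->]]]].
  - by apply: OSD; apply: OSM.
  - by exists 0, 0; rewrite !mul0r addr0.
  - exists (a + a'), (b + b'); split; try exact: OSD.
    by rewrite !mulrDl addrACA.
  - by exists (r * a), (r * b); split; rewrite ?mulrDr ?mulrA //; apply: OSM.
have [|gh [Ogh Dg]] := (Jh g).1; first by exists 1, 0; rewrite mul1r mul0r addr0.
have [|gth [Ogth Dgt]] := (Jh (g * t)).1; first by exists 0, 1; rewrite mul1r mul0r add0r.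
have [|a [b [Oa Ob Dh]]] := (Jh h).2; first by exists 1; rewrite mul1r.
have h_neq0 : h != 0 by apply: contra_neq g_neq0 => h0; rewrite Dg h0 mulr0.
have [|e Oe Dgh] := g_denom gh Ogh.
  suff -> : gh * t = gth by [].
  by apply: (mulIf h_neq0); rewrite mulrAC -Dg.
have eh1 : e * h = 1 by apply: (mulfI g_neq0); rewrite mulr1 mulrA [g * e]mulrC -Dgh -Dg.
exists (g * t), g; split => //; first by rewrite mulrC mulKf.
exists (e * a), (e * b); split; try exact: OSM.
by rewrite -!mulrA -mulrDr -Dh.
Qed.

Lemma pole_inverse p t : nzprime p -> ~ inP p S0 -> ~ Oloc p t ->
  exists2 s, Mloc p s & t * s = 1.
Proof.
move=> p_prime pS0 t_pole.
have [y [z [Oy Oz z_neq0 Dt [a [b [Oa Ob Dab]]]]]] := OS_coprime_frac t.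
have Op x : OS S0 x -> Oloc p x by move=> Ox; apply: Ox.
have [Mz | Oz'] := Oloc_dichotomy (Op _ Oz); last first.
  by case: t_pole; rewrite Dt; apply: (OlocM p_prime) => //; apply: Op.
have [My | Oy'] := Oloc_dichotomy (Op _ Oy).
  case: (Mloc_neq1 p_prime); rewrite -Dab.
  by apply: (MlocD p_prime); apply: (MlocM p_prime) => //; apply: Op.
have t_neq0 : t != 0.
  by apply: contra_not_neq t_pole => ->; apply/Oloc_int/(isInt_int _ 0).
by exists t^-1; [rewrite Dt invf_div mulrC; apply: (MlocM p_prime) | rewrite divff].
Qed.
End SIntegers.

Section WeierstrassModel2.
Variable F : fieldType.

Lemma wiso_invariants (E E' : wmodel F) : wiso E E' ->
  exists2 u, u != 0 & wc4 E = u ^+ 4 * wc4 E' /\ wdisc E = u ^+ 12 * wdisc E'.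
Proof.
move=> [u [r [s [w [u_neq0 [e1 [e2 [e3 [e4 e6]]]]]]]]]; exists u => //.
pose Eu := WModel (u * wa1 E') (u ^+ 2 * wa2 E') (u ^+ 3 * wa3 E')
                  (u ^+ 4 * wa4 E') (u ^+ 6 * wa6 E').
have -> : u ^+ 4 * wc4 E' = wc4 Eu by rewrite /wc4 /wb2 /wb4 /=; ring.
have -> : u ^+ 12 * wdisc E' = wdisc Eu by rewrite /wdisc /wb2 /wb4 /wb6 /wb8 /=; ring.
rewrite /Eu e1 e2 e3 e4 e6 /wc4 /wdisc /wb2 /wb4 /wb6 /wb8 /=.
by split; ring.
Qed.

Lemma model2_c4 (A B : F) : wc4 (model2 A B) = 16 * (A ^+ 2 - 3 * B).
Proof. by rewrite /wc4 /wb2 /wb4 /=; ring. Qed.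

Lemma model2_disc (A B : F) : wdisc (model2 A B) = 16 * (A ^+ 2 - 4 * B) * B ^+ 2.
Proof. by rewrite /wdisc /wb2 /wb4 /wb6 /wb8 /=; ring. Qed.

Lemma wiso_model2_scale (A B u v : F) : u * v = 1 ->
  wiso (model2 A B) (model2 (A * v ^+ 2) (B * v ^+ 4)).
Proof.
move=> uv1; have uv k : u ^+ k * v ^+ k = 1 by rewrite -exprMn uv1 expr1n.
exists u, 0, 0, 0; split=> /=.
  by apply: contra_eq_neq uv1 => ->; rewrite mul0r eq_sym oner_eq0.
split; first by rewrite mulr0 mulr0 addr0.
split; first by rewrite mulrCA uv; ring.
split; first by rewrite !mulr0 !addr0.
split; first by rewrite mulrCA uv; ring.
by rewrite mulr0; ring.
Qed.

End WeierstrassModel2.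

Section Pole.
Variables (K : fieldExtType rat) (p : K -> Prop).
Hypothesis p_prime : nzprime p.
Variables t s : K.
Hypotheses (s_max : Mloc p s) (ts1 : t * s = 1).

Lemma horner_pole (f : {poly K}) n : intpoly f -> (size f <= n.+1)%N ->
  exists2 e, Mloc p e & f.[t] * s ^+ n = f`_n + e.
Proof.
move=> If size_f; rewrite (horner_coef_wide t size_f) big_ord_recr /= mulrDl.
exists ((\sum_(i < n) f`_i * t ^+ i) * s ^+ n); last first.
  by rewrite addrC -mulrA -exprMn ts1 expr1n mulr1.
rewrite mulr_suml; elim/big_ind: _ => [||[i lt_in] _ /=]; first exact: Mloc0.
  exact: MlocD.
have -> : f`_i * t ^+ i * s ^+ n = f`_i * s ^+ (n - i.+1) * s.
  have -> : s ^+ n = s ^+ i * (s ^+ (n - i.+1) * s).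
    by rewrite -exprSr -exprD; congr (_ ^+ _); lia.
  have tsi : t ^+ i * s ^+ i = 1 by rewrite -exprMn ts1 expr1n.
  set A := t ^+ i; set B := s ^+ i; set C := s ^+ (n - i.+1).
  have -> : f`_i * A * (B * (C * s)) = f`_i * (A * B) * C * s by ring.
  by rewrite tsi mulr1.
apply: (MlocM p_prime) => //; apply: (OlocM p_prime); first exact: Oloc_int.
exact/(OlocX p_prime)/Mloc_Oloc.
Qed.

Lemma Oloc_horner_pole (f : {poly K}) n : intpoly f -> (size f <= n.+1)%N ->
  Oloc p (f.[t] * s ^+ n).
Proof.
move=> If size_f; have [e Me ->] := horner_pole If size_f.
by apply: (OlocD p_prime); [exact: Oloc_int | exact: Mloc_Oloc].
Qed.

Lemma unit_horner_pole (f : {poly K}) n : intpoly f -> size f = n.+1 ->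
  ~ p (lead_coef f) -> unitO (Oloc p) (f.[t] * s ^+ n).
Proof.
move=> If size_f; rewrite lead_coefE size_f /= => npl.
have [e Me ->] := horner_pole If (eq_leq size_f).
exact: unitO_addMloc.
Qed.

Lemma good_red_model2_pole (A B : {poly K}) m :
  intpoly A -> intpoly B -> (size A <= (2 * m).+1)%N -> size B = (4 * m).+1 ->
  size (A ^+ 2 - 4 * B) = (4 * m).+1 ->
  ~ p 2 -> ~ p (lead_coef B) -> ~ p (lead_coef (A ^+ 2 - 4 * B)) ->
  good_red (Oloc p) (model2 A.[t] B.[t]).
Proof.
set D := A ^+ 2 - 4 * B => IA IB size_A size_B size_D np2 nplB nplD.
have IlB : isInt (lead_coef B) by rewrite lead_coefE.
have ID : intpoly D := intpoly_sqrB4M IA IB.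
have IlD : isInt (lead_coef D) by rewrite lead_coefE.
have O0 : Oloc p 0 := Oloc_int p_prime (isInt_int _ 0).
pose v := s ^+ m.
exists (model2 (A.[t] * v ^+ 2) (B.[t] * v ^+ 4)); split.
  by apply: (@wiso_model2_scale _ _ _ (t ^+ m)); rewrite -exprMn ts1 expr1n.
split.
  by rewrite /v -!exprM; do !split => //=; apply: Oloc_horner_pole; rewrite // mulnC ?size_B.
have -> : wdisc (model2 (A.[t] * v ^+ 2) (B.[t] * v ^+ 4)) =
          (16 * D * B ^+ 2).[t] * s ^+ (m * 12).
  rewrite exprM -/v model2_disc /D.
  by rewrite !(hornerM, hornerD, hornerN, horner_exp, hornerMn) -polyC1 hornerC; ring.
apply: unit_horner_pole.
- by apply/intpolyM/intpolyX/IB/intpolyM/ID/intpoly_nat.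
- have B_neq0 : B != 0 by rewrite -size_poly_gt0 size_B.
  have D_neq0 : D != 0 by rewrite -size_poly_gt0 size_D.
  have size_B2 : size (B ^+ 2) = (8 * m).+1.
    by rewrite -[LHS]prednK ?size_poly_gt0 ?expf_neq0 // size_exp size_B /=; lia.
  by rewrite -mulrA (size_natrM (pchar_numfield K)) // size_mul ?expf_neq0 // size_B2 size_D; lia.
- rewrite lead_coefM lead_coef_exp lead_coefM -polyC_natr lead_coefC.
  apply: (prime_notpM p_prime); last exact: prime_notpX.
  - exact/isIntM/IlD/isInt_nat.
  - exact: isIntX.
  - by apply: (prime_notpM p_prime) => //; [exact: isInt_nat | exact: prime_notp16].
Qed.

Lemma good_red_isogenous_model2_pole (A B : {poly K}) m :
  intpoly A -> intpoly B -> (size A <= (2 * m).+1)%N -> size B = (4 * m).+1 ->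
  size (A ^+ 2 - 4 * B) = (4 * m).+1 ->
  ~ p 2 -> ~ p (lead_coef B) -> ~ p (lead_coef (A ^+ 2 - 4 * B)) ->
  good_red (Oloc p) (model2 (- 2 * A.[t]) (A.[t] ^+ 2 - 4 * B.[t])).
Proof.
move=> IA IB size_A size_B size_D np2 np_B np_D.
have K0 := pchar_numfield K.
have IlB : isInt (lead_coef B) by rewrite lead_coefE.
have := @good_red_model2_pole (- 2 * A) (A ^+ 2 - 4 * B) m.
rewrite (_ : (- 2 * A) ^+ 2 - 4 * (A ^+ 2 - 4 * B) = 16 * B); last by ring.
rewrite !(hornerM, hornerD, hornerN, horner_exp, hornerMn) -polyC1 hornerC; apply=> //.
- by apply/intpolyM/IA/intpolyN/intpoly_nat.
- exact: intpoly_sqrB4M.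
- by rewrite mulNr size_polyN (size_natrM K0).
- by rewrite (size_natrM K0).
- rewrite lead_coefM -polyC_natr lead_coefC.
  by apply: (prime_notpM p_prime) => //; [exact: isInt_nat | exact: prime_notp16].
Qed.

End Pole.

Section Infinity.
Variable F : fieldType.
Implicit Types P Q f g h : {poly F}.
Local Notation O_inf := (@O_inf F).

Lemma tof_neq0 P : P != 0 -> tof P != 0. Proof. by rewrite tofrac_eq0. Qed.
Lemma tofM P Q : tof (P * Q) = tof P * tof Q. Proof. exact: rmorphM. Qed.
Lemma tofB P Q : tof (P - Q) = tof P - tof Q. Proof. exact: rmorphB. Qed.
Lemma tofX P k : tof (P ^+ k) = tof P ^+ k. Proof. exact: rmorphXn. Qed.
Lemma tof_natr n : tof n%:R = n%:R :> FT F. Proof. exact: rmorph_nat. Qed.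

Lemma FT_repr (x : FT F) : exists f g, g != 0 /\ x = tof f / tof g.
Proof.
elim/quotW: x => x; exists (\n_x), (\d_x); split; first exact: denom_ratioP.
rewrite /tof; unlock FracField.tofrac; rewrite !piE.
apply/eqP; rewrite FracField.equivf_def /FracField.mulf /FracField.invf.
rewrite !numden_Ratio ?oner_eq0 ?mulf_neq0 ?denom_ratioP // ?oner_eq0 //.
by rewrite mul1r mulr1 mulrC.
Qed.

Lemma O_infD x y : O_inf x -> O_inf y -> O_inf (x + y).
Proof.
move=> [g [h [h0 [gh ->]]]] [g' [h' [h'0 [gh' ->]]]].
exists (g * h' + g' * h), (h * h'); split; first by rewrite mulf_neq0.
split; last by rewrite addf_div ?tof_neq0 // /tof rmorphD !rmorphM.
apply: leq_trans (size_polyD _ _) _; rewrite geq_max (size_mul h0 h'0).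
by apply/andP; split; apply: leq_trans (size_polyMleq _ _) _;
  rewrite -!subn1 leq_sub2r // ?leq_add2r // addnC leq_add2l.
Qed.

Lemma O_infM x y : O_inf x -> O_inf y -> O_inf (x * y).
Proof.
move=> [g [h [h0 [gh ->]]]] [g' [h' [h'0 [gh' ->]]]].
exists (g * g'), (h * h'); split; first by rewrite mulf_neq0.
split; last by rewrite mulf_div /tof !rmorphM.
by apply: leq_trans (size_polyMleq _ _) _; rewrite (size_mul h0 h'0) -!subn1 leq_sub2r // leq_add.
Qed.

Lemma O_infC c : O_inf (tof c%:P).
Proof.
exists c%:P, 1; split; first exact: oner_neq0.
by rewrite size_poly1 size_polyC_leq1 /tof rmorph1 divr1.
Qed.

Lemma O_infB x y : O_inf x -> O_inf y -> O_inf (x - y).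
Proof.
move=> Ox Oy; apply: O_infD => //; rewrite -mulN1r; apply: O_infM => //.
by have := O_infC (-1); rewrite /tof polyCN rmorphN polyC1 rmorph1.
Qed.

Lemma O_inf_natr n : O_inf n%:R.
Proof. by have := O_infC n%:R; rewrite /tof polyC_natr rmorph_nat. Qed.

Lemma O_inf_size_le P Q x : Q != 0 -> O_inf x -> tof P = tof Q * x ->
  (size P <= size Q)%N.
Proof.
move=> Q0 [g [h [h0 [gh ->]]]] eP.
have /eqP : tof (P * h) = tof (Q * g) by rewrite !tofM eP mulrA divfK ?tof_neq0.
rewrite tofrac_eq => /eqP ePh.
have [-> | P0] := eqVneq P 0; first by rewrite size_poly0.
have g0 : g != 0 by apply: contra_neq P0 => g0; apply/eqP; move: ePh; rewrite g0 mulr0 => /eqP;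
  rewrite mulf_eq0 (negPf h0) orbF.
have := congr1 (fun q : {poly F} => size q) ePh; rewrite /= !size_mul //.
have := size_poly_gt0 Q; have := size_poly_gt0 h; rewrite Q0 h0; move: gh.
by move: (size P) (size Q) (size g) (size h) => ????; lia.
Qed.

Lemma size_exprn f k : f != 0 -> size (f ^+ k) = ((size f).-1 * k).+1.
Proof. by move=> f0; rewrite -size_exp prednK // size_poly_gt0 expf_neq0. Qed.

Lemma size_mul_exprn P f k : P != 0 -> f != 0 ->
  size (P * f ^+ k) = ((size P).-1 + (size f).-1 * k).+1.
Proof.
move=> P0 f0; rewrite size_mul ?expf_neq0 // size_exprn //.
have : (0 < size P)%N by rewrite size_poly_gt0.
by case: (size P) => // n _; rewrite addSn addnS.
Qed.

End Infinity.

Section InfinityDegrees.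
Variable F : fieldType.
Hypothesis F_char0 : [pchar F] =i pred0.

Lemma model2_degrees (a b : {poly F}) m :
  b != 0 -> a ^+ 2 - 4 * b != 0 ->
  size (16 * (a ^+ 2 - 4 * b) * b ^+ 2) = (12 * m).+1 ->
  (size (16 * (a ^+ 2 - 3 * b))%R <= (4 * m).+1)%N ->
  [/\ (size a <= (2 * m).+1)%N, size b = (4 * m).+1 & size (a ^+ 2 - 4 * b) = (4 * m).+1].
Proof.
set c := (a ^+ 2 - 3 * b)%R; set d := (a ^+ 2 - 4 * b)%R => b0 d0 size_D.
rewrite (size_natrM F_char0) // => size_c.
have size_b : size b = size (a ^+ 2 - c).
  by rewrite -(@size_natrM _ F_char0 3 b) // (_ : 3 * b = a ^+ 2 - c) // /c; ring.
have size_d : size d = size (- a ^+ 2 + 4 * c).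
  by rewrite -(@size_natrM _ F_char0 3 d) // (_ : 3 * d = - a ^+ 2 + 4 * c) // /d /c; ring.
have size_db : ((size d).-1 + (size b).-1 * 2 = 12 * m)%N.
  move: size_D; rewrite -mulrA (size_natrM F_char0) // size_mul ?expf_neq0 //.
  rewrite -[size (b ^+ 2)]prednK ?size_poly_gt0 ?expf_neq0 // size_exp.
  have : (0 < size d)%N by rewrite size_poly_gt0.
  by move: (size d) (size b) => x y; lia.
have size_a2 := size_poly_exp_leq a 2.
have le_a : (size a <= (2 * m).+1)%N.
  rewrite leqNgt; apply/negP => lt_a.
  have a0 : a != 0 by rewrite -size_poly_gt0 (leq_trans _ lt_a).
  have {}size_a2 : size (a ^+ 2) = ((size a).-1 * 2).+1.
    by rewrite -size_exp prednK // size_poly_gt0 expf_neq0.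
  have lt_c : (size c < size (a ^+ 2))%N by rewrite size_a2; move: size_c lt_a; lia.
  have eb : size b = size (a ^+ 2) by rewrite size_b size_polyDl // size_polyN.
  have ed : size d = size (a ^+ 2) by rewrite size_d size_polyDl size_polyN // (size_natrM F_char0).
  by move: size_db lt_a; rewrite eb ed size_a2; move: (size a) => x; lia.
have le_b : (size b <= (4 * m).+1)%N.
  rewrite size_b; apply: leq_trans (size_polyD _ _) _; rewrite size_polyN geq_max size_c.
  by rewrite (leq_trans size_a2) //; move: le_a; lia.
have le_d : (size d <= (4 * m).+1)%N.
  rewrite size_d; apply: leq_trans (size_polyD _ _) _; rewrite size_polyN (size_natrM F_char0) //.
  by rewrite geq_max size_c (leq_trans size_a2) //; move: le_a; lia.
have : (0 < size b)%N by rewrite size_poly_gt0.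
have : (0 < size d)%N by rewrite size_poly_gt0.
by move: size_db le_b le_d; move: (size b) (size d) => x y; split=> //; lia.
Qed.

Lemma good_red_inf_sizes (a b : {poly F}) : b != 0 -> a ^+ 2 - 4 * b != 0 ->
    good_red (@O_inf F) (model2 (tof a) (tof b)) ->
  exists m, size (16 * (a ^+ 2 - 4 * b) * b ^+ 2) = (12 * m).+1 /\
            (size (16 * (a ^+ 2 - 3 * b))%R <= (4 * m).+1)%N.
Proof.
move=> b0 d0 [E' [iso_E' [IE' [OD ODV]]]].
have [u u0 [c4E dE]] := wiso_invariants iso_E'.
have [f1 [f2 [f2_0 Du]]] := FT_repr u.
have f1_0 : f1 != 0 by apply: contra_neq u0 => f1_0; rewrite Du f1_0 /tof rmorph0 mul0r.
set D := (16 * (a ^+ 2 - 4 * b) * b ^+ 2)%R; set C := (16 * (a ^+ 2 - 3 * b))%R.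
have n16 : (16 : {poly F}) != 0 by rewrite -polyC_natr polyC_eq0 (natf_neq0 F_char0).
have D0 : D != 0 by rewrite !mulf_neq0 ?expf_neq0.
have tD : tof D = u ^+ 12 * wdisc E'.
  by rewrite -dE model2_disc /D !(tofM, tofB, tofX, tof_natr).
have tC : tof C = u ^+ 4 * wc4 E'.
  by rewrite -c4E model2_c4 /C !(tofM, tofB, tofX, tof_natr).
have scaled k P x : tof P = u ^+ k * x -> tof (P * f2 ^+ k) = tof (f1 ^+ k) * x.
  move=> eP; rewrite tofM !tofX eP Du expr_div_n -mulrA (mulrC x) mulrA.
  by rewrite (divfK (expf_neq0 k (tof_neq0 f2_0))).
have f1X k : f1 ^+ k != 0 := expf_neq0 k f1_0.
have Dn0 : wdisc E' != 0.
  by apply: contra_neq D0 => dn0; apply/eqP; rewrite -tofrac_eq0 -/(tof D) tD dn0 mulr0.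
have le_D := O_inf_size_le (f1X 12%N) OD (scaled _ _ _ tD).
have ge_D : (size (f1 ^+ 12)%R <= size (D * f2 ^+ 12)%R)%N.
  apply: O_inf_size_le (mulf_neq0 D0 (expf_neq0 _ f2_0)) ODV _.
  by rewrite (scaled _ _ _ tD) mulfK.
exists ((size f1).-1 - (size f2).-1)%N; split.
  move: le_D ge_D; rewrite size_mul_exprn ?size_exprn //.
  have : (0 < size D)%N by rewrite size_poly_gt0.
  by move: (size D) (size f1) (size f2) => x y z; lia.
have [-> | C0] := eqVneq C 0; first by rewrite size_poly0.
have Oc4 : O_inf (wc4 E').
  case: IE' => O1 [O2 [O3 [O4 _]]]; rewrite /wc4 /wb2 /wb4 !expr2.
  by repeat first [assumption | apply: O_inf_natr | apply: O_infB | apply: O_infD | apply: O_infM].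
have := O_inf_size_le (f1X 4%N) Oc4 (scaled _ _ _ tC); rewrite size_mul_exprn ?size_exprn //.
by move: (size C) (size f1) (size f2) => x y z; lia.
Qed.

End InfinityDegrees.

End PoleReduction.
Import PoleReduction.

Theorem lemma5p4 (K : fieldExtType rat) (a b : {poly K})
    (Bs As Ms Mps : seq K) (S0 : seq (K -> Prop)) :
  (* a, b in O_K[T]; E is an elliptic curve (Delta <> 0) *)
  (forall i, isInt a`_i) -> (forall i, isInt b`_i) ->
  b != 0 -> a ^+ 2 - 4 * b != 0 ->
  (* the model is minimal over K[T] *)
  (forall q, closed_fin q ->
     minimal_model (O_fin q) (tof q) (model2 (tof a) (tof b))) ->
  (* B = bad closed points, all of degree 1, B subset O_K (not infinity) *)
  uniq Bs -> (forall al, al \in Bs -> isInt al) ->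
  (forall q, closed_fin q ->
     (~ good_red (O_fin q) (model2 (tof a) (tof b)) <->
      exists2 al, al \in Bs & q = 'X - al%:P)) ->
  good_red (@O_inf K) (model2 (tof a) (tof b)) ->
  (* A : additive points *)
  uniq As ->
  (forall al, al \in As <-> al \in Bs /\
     additive (O_fin ('X - al%:P)) (tof ('X - al%:P)) (model2 (tof a) (tof b))) ->
  (* M : E, E' have symbols I_{2n}, I_n *)
  uniq Ms ->
  (forall al, al \in Ms <-> al \in Bs /\
     ~ additive (O_fin ('X - al%:P)) (tof ('X - al%:P)) (model2 (tof a) (tof b)) /\
     exists n, (0 < n)%N /\
       mult_In (O_fin ('X - al%:P)) (tof ('X - al%:P)) (n.*2) (model2 (tof a) (tof b)) /\
       mult_In (O_fin ('X - al%:P)) (tof ('X - al%:P)) n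
               (model2 (tof (- 2 * a)) (tof (a ^+ 2 - 4 * b)))) ->
  (* M' : E, E' have symbols I_n, I_{2n} *)
  uniq Mps ->
  (forall al, al \in Mps <-> al \in Bs /\
     ~ additive (O_fin ('X - al%:P)) (tof ('X - al%:P)) (model2 (tof a) (tof b)) /\
     exists n, (0 < n)%N /\
       mult_In (O_fin ('X - al%:P)) (tof ('X - al%:P)) n (model2 (tof a) (tof b)) /\
       mult_In (O_fin ('X - al%:P)) (tof ('X - al%:P)) (n.*2)
               (model2 (tof (- 2 * a)) (tof (a ^+ 2 - 4 * b)))) ->
  (* (b) *)
  Ms != [::] -> Mps != [::] ->
  (* (c) *)
  (forall al, al \in Ms ->
     split_mult (O_fin ('X - al%:P)) (tof ('X - al%:P))
                (model2 (tof (- 2 * a)) (tof (a ^+ 2 - 4 * b))) \/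
     exists n, odd n /\ mult_In (O_fin ('X - al%:P)) (tof ('X - al%:P)) n
                          (model2 (tof (- 2 * a)) (tof (a ^+ 2 - 4 * b)))) ->
  (* (d) *)
  (forall al, al \in Mps ->
     split_mult (O_fin ('X - al%:P)) (tof ('X - al%:P)) (model2 (tof a) (tof b)) \/
     exists n, odd n /\ mult_In (O_fin ('X - al%:P)) (tof ('X - al%:P)) n
                          (model2 (tof a) (tof b))) ->
  (* (e) *)
  (forall al, al \in As -> forall n,
     kodaira_Instar (O_fin ('X - al%:P)) (tof ('X - al%:P)) n (model2 (tof a) (tof b)) ->
     tamagawa4_Instar (O_fin ('X - al%:P)) (tof ('X - al%:P)) (model2 (tof a) (tof b)) /\
     tamagawa4_Instar (O_fin ('X - al%:P)) (tof ('X - al%:P))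
                      (model2 (tof (- 2 * a)) (tof (a ^+ 2 - 4 * b)))) ->
  (* (f) dim delta_E(E(K(T))) >= |A| + |M| - 1 *)
  (exists pts : seq (option (FT K * FT K)),
     size pts = (size As + size Ms).-1 /\
     (forall P, P \in pts -> on_curve2 (tof a) (tof b) P) /\
     sq_indep (map (delta2 (tof b)) pts)) ->
  (* (g) dim delta_E'(E'(K(T))) >= |A| + |M'| - 1 *)
  (exists pts : seq (option (FT K * FT K)),
     size pts = (size As + size Mps).-1 /\
     (forall P, P \in pts -> on_curve2 (tof (- 2 * a)) (tof (a ^+ 2 - 4 * b)) P) /\
     sq_indep (map (delta2 (tof (a ^+ 2 - 4 * b))) pts)) ->
  (* S_0 *)
  (forall i, (i < size S0)%N -> nzprime (nth (fun _ => False) S0 i)) ->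
  (forall p, nzprime p ->
     (p 6 \/
      (exists al be, al \in Bs /\ be \in Bs /\ al != be /\ p (al - be)) \/
      p (lead_coef (16 * (a ^+ 2 - 4 * b) * b ^+ 2))) ->
     inP p S0) ->
  is_PID_OS S0 ->
  (* conclusion *)
  exists exc : seq (K -> Prop),
    forall p, nzprime p -> ~ inP p S0 -> ~ inP p exc ->
    forall t : K, t \notin Bs -> ~ Oloc p t ->
      good_red (Oloc p) (model2 a.[t] b.[t]) /\
      good_red (Oloc p) (model2 (- 2 * a.[t]) (a.[t] ^+ 2 - 4 * b.[t])).
Proof.
move=> Ia Ib b0 d0 _ _ _ _ good_inf _ _ _ _ _ _ _ _ _ _ _ _ _ _ S0_bad S0_PID.
have K0 := pchar_numfield K.
have [m [size_D size_C]] := good_red_inf_sizes K0 b0 d0 good_inf.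
have [size_a size_b size_d] := model2_degrees K0 b0 d0 size_D size_C.
have Id : intpoly (a ^+ 2 - 4 * b) := intpoly_sqrB4M Ia Ib.
exists [::] => p p_prime pS0 _ t _ t_pole.
have [s s_max ts1] := pole_inverse S0_PID p_prime pS0 t_pole.
have [np2 np_b np_d] := notp_disc_lead_coef p_prime Id Ib
  (fun p6 => pS0 (S0_bad p p_prime (or_introl p6)))
  (fun pD => pS0 (S0_bad p p_prime (or_intror (or_intror pD)))).
by split; [apply: good_red_model2_pole | apply: good_red_isogenous_model2_pole]; eassumption.
Qed.
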